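(* For every prime $p$, the polynomial $P_{2,p}(z)=\sum_{n=0}^{p-1}\left(\frac{-1}{2n-1}\binom{2n}{n}^2\bmod p\right)z^n\in\mathbb{F}_p[z]$ is separable over $\overline{\mathbb{F}_p}$; in particular $P_{2,p}$ and its derivative $P_{2,p}'$ have no common root.
   Context: The coefficients $\frac{-1}{2n-1}\binom{2n}{n}^2$ are integers, so their reduction mod $p$ makes sense. *)

From HB Require Import structures.
From mathcomp Require Import all_boot all_order all_algebra all_field.
Set Implicit Arguments. Unset Strict Implicit. Unset Printing Implicit Defensive.
Import Order.TTheory GRing.Theory Num.Theory.
Local Open Scope ring_scope.

(* The integer coefficient  -1/(2n-1) * binom(2n,n)^2  (exact division in int;
   for n = 0 this is (-1) %/ (-1) = 1). *)
Definition coef2 (n : nat) : int :=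
  ((- ('C(n.*2, n) ^ 2)%:Z) %/ ((n.*2)%:Z - 1))%Z.

Definition P2 (p : nat) : {poly 'F_p} := \poly_(n < p) (coef2 n)%:~R.

From HB Require Import structures.
From mathcomp Require Import all_boot all_order all_algebra all_field.
From mathcomp Require Import zify ring.
Set Implicit Arguments. Unset Strict Implicit. Unset Printing Implicit Defensive.
Import GRing.Theory.
Local Open Scope ring_scope.

(* The integers c_n satisfy (n+1)^2 c_{n+1} = 4(2n+1)(2n-1) c_n, which is
   equivalent to the hypergeometric differential equation
        (1 - 16z)(z y'' + y') + 4y = 0.
   Modulo p the truncation to degree < p is harmless (the recurrence at
   n = p-1 reads 0 = 0), so P_{2,p} solves this equation over any field L of
   characteristic p.  If x were a double root of P_{2,p}, then x != 0 (as
   P_{2,p}(0) = 1) and Q(z) = P_{2,p}(z + x) would solve the shifted equation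
   (1 - 16x - 16z)((z + x) Q'' + Q') + 4Q = 0 with Q(0) = Q'(0) = 0.  Looking
   at the lowest nonzero coefficient q_m of Q (2 <= m < p), the coefficients
   of z^(m-2) and z^(m-1) of the equation force x(1 - 16x) m(m-1) q_m = 0 and
   then 16x m(m-1) q_m = 0, a contradiction.  Separability over F_p follows
   from the absence of double roots in an algebraic closure of F_p. *)

Lemma central_binomialS n :
  (n.+1 * 'C(n.+1.*2, n.+1) = 2 * n.*2.+1 * 'C(n.*2, n))%N.
Proof.
rewrite doubleS binS.
have -> : 'C(n.*2.+1, n) = 'C(n.*2.+1, n.+1).
  by rewrite -bin_sub; [congr 'C(_, _) | ]; lia.
have /= diag := mul_bin_diag n.*2.+1 n.
by rewrite mulnDr -diag; lia.
Qed.

(* 2n+1 divides binom(2n+2, n+1), since it is coprime to n+1. *)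
Lemma odd_dvd_central_binomialS n : (n.*2.+1 %| 'C(n.+1.*2, n.+1))%N.
Proof.
have cop : coprime n.*2.+1 n.+1.
  have -> : n.*2.+1 = (n + n.+1)%N by lia.
  by rewrite -coprime_modl modnDr modn_small // coprimenS.
by rewrite -(Gauss_dvdr _ cop) central_binomialS -mulnA mulnCA dvdn_mulr.
Qed.

Lemma coef2_mul_denom n : coef2 n * ((n.*2)%:Z - 1) = - ('C(n.*2, n) ^ 2)%N%:Z.
Proof.
rewrite /coef2 divzK //; case: n => [|n] //.
have -> : (n.+1.*2)%:Z - 1 = (n.*2.+1)%N by rewrite doubleS; lia.
by rewrite dvdzE abszN !absz_nat expnS dvdn_mulr // odd_dvd_central_binomialS.
Qed.

Lemma coef2S n :
  (n.+1 ^ 2)%N%:Z * coef2 n.+1 = 4 * (n.*2.+1)%:Z * ((n.*2)%:Z - 1) * coef2 n.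
Proof.
have odd_neq0 : (n.*2.+1)%:Z != 0 by [].
apply: (mulIf odd_neq0).
have denomS : (n.+1.*2)%:Z - 1 = (n.*2.+1)%:Z by rewrite doubleS; lia.
have := coef2_mul_denom n.+1; rewrite denomS => mulS.
have mul0 := coef2_mul_denom n.
have sq := congr1 (fun m => ((m ^ 2)%N%:Z)) (central_binomialS n).
rewrite /= !expnMn !PoszM in sq.
transitivity ((n.+1 ^ 2)%N%:Z * (coef2 n.+1 * (n.*2.+1)%:Z)); first by ring.
rewrite mulS mulrN sq.
transitivity (4 * (n.*2.+1)%:Z * (n.*2.+1)%:Z * (coef2 n * ((n.*2)%:Z - 1))); last by ring.
by rewrite mul0 mulrN expnS expn1 PoszM; ring.
Qed.

Section HypergeometricOperator.
Variable L : fieldType.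

(* The k-th coefficient of (X + a) Q'' + Q'. *)
Definition euler_coef (a : L) (Q : {poly L}) (k : nat) : L :=
  Q`_k.+1 * (k.+1 ^ 2)%:R + a * Q`_k.+2 * (k.+2 * k.+1)%:R.

(* The operator y |-> (1 - 16z)(z y'' + y') + 4y written in the shifted
   coordinate z = X + a. *)
Definition hyp_op (a : L) (Q : {poly L}) : {poly L} :=
  ((1 - 16 * a)%:P - 16%:P * 'X) * (('X + a%:P) * Q^`()^`() + Q^`()) + 4%:P * Q.

Lemma coef_euler a Q k :
  (('X + a%:P) * Q^`()^`() + Q^`())`_k = euler_coef a Q k.
Proof.
rewrite /euler_coef !mulr_natr mulrDl !coefD coefXM coefCM !coef_deriv.
rewrite -!mulrnA mulrnAr; case: k => [|k] /=; first by rewrite add0r addrC.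
by rewrite addrAC -mulrnDr; congr (_ + _); congr (_ *+ _); lia.
Qed.

Lemma coef_hyp_op a Q k :
  (hyp_op a Q)`_k = (1 - 16 * a) * euler_coef a Q k
    - 16 * (if k is k'.+1 then euler_coef a Q k' else 0) + 4 * Q`_k.
Proof.
rewrite /hyp_op mulrBl -mulrA coefD coefB !coefCM coefXM !coef_euler.
by case: k.
Qed.

Lemma hyp_op_comp a b Q :
  hyp_op a Q \Po ('X + b%:P) = hyp_op (a + b) (Q \Po ('X + b%:P)).
Proof.
have dcomp R : (R \Po ('X + b%:P))^`() = R^`() \Po ('X + b%:P).
  by rewrite deriv_comp derivD derivX derivC addr0 mulr1.
rewrite /hyp_op !dcomp.
rewrite comp_polyD !comp_polyM comp_polyB !(comp_polyD, comp_polyM, comp_polyC, comp_polyX).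
rewrite !(polyCD, polyCB, polyCM); ring.
Qed.

Lemma hyp_op_of_rec (P : {poly L}) :
  (forall n, (n.+1 ^ 2)%:R * P`_n.+1 = 4 * (n.*2.+1)%:R * ((n.*2)%:R - 1) * P`_n) ->
  hyp_op 0 P = 0.
Proof.
move=> rec; apply/polyP => k; rewrite coef_hyp_op coef0 mulr0 subr0 mul1r.
case: k => [|k]; rewrite /euler_coef !mul0r !addr0.
  by rewrite mulrC (rec 0%N) double0 mulr0 subr0; ring.
rewrite [P`_k.+2 * _]mulrC (rec k.+1) natrX -addnn !(addSn, addnS) -!natr1 natrD.
ring.
Qed.

End HypergeometricOperator.

Section NoDoubleRoot.
Variables (L : fieldType) (p : nat).
Hypothesis natr_neq0 : forall n, (0 < n < p)%N -> n%:R != 0 :> L.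

Lemma hyp_op_vanishing a (Q : {poly L}) :
  a != 0 -> (size Q <= p)%N -> Q`_0 = 0 -> Q`_1 = 0 -> hyp_op a Q = 0 -> Q = 0.
Proof.
move=> a0 sizeQ Q0 Q1 opQ; apply/eqP; apply: contraT => nzQ.
have nz_coef : exists m, Q`_m != 0.
  by exists (size Q).-1; rewrite -lead_coefE lead_coef_eq0.
have [m nzQm min_m] := ex_minnP nz_coef.
have below i : (i < m)%N -> Q`_i = 0.
  by move=> lt_im; apply/eqP; apply: contraTT lt_im => /min_m; rewrite -leqNgt.
have lt_mp : (m < p)%N.
  apply: leq_trans sizeQ; rewrite ltnNge; apply: contra nzQm => /leq_sizeP -> //.
case: m nzQm min_m below lt_mp => [|[|n]] nzQm _ below lt_mp.
- by rewrite Q0 eqxx in nzQm.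
- by rewrite Q1 eqxx in nzQm.
pose q := Q`_n.+2 * (n.+2 * n.+1)%:R.
have q0 : q != 0.
  by rewrite /q natrM !mulf_neq0 // natr_neq0 // ?lt_mp ?(ltnW lt_mp).
have euler_n : euler_coef a Q n = a * q.
  by rewrite /euler_coef below // mul0r add0r mulrA.
have euler_prev : (if n is n'.+1 then euler_coef a Q n' else 0) = 0.
  by case: n {q q0 euler_n nzQm} below lt_mp => // n below _;
     rewrite /euler_coef !below // mulr0 !mul0r addr0.
(* Coefficient of z^n: (1 - 16a) a q = 0. *)
have c0 : 1 - 16 * a = 0.
  have /eqP := congr1 (fun R : {poly L} => R`_n) opQ.
  rewrite coef_hyp_op coef0 euler_n euler_prev below // !mulr0 subr0 addr0.
  by rewrite mulf_eq0 (negbTE (mulf_neq0 a0 q0)) orbF => /eqP.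
(* Coefficient of z^(n+1): 16 a q = q = 0. *)
have /eqP := congr1 (fun R : {poly L} => R`_n.+1) opQ.
rewrite coef_hyp_op coef0 euler_n below // c0 mul0r mulr0 add0r addr0 oppr_eq0.
move/eqP: c0; rewrite subr_eq0 mulrA => /eqP <-.
by rewrite mul1r (negbTE q0).
Qed.

Lemma no_double_root (P : {poly L}) x :
  hyp_op 0 P = 0 -> (size P <= p)%N -> P`_0 != 0 -> ~~ (root P x && root P^`() x).
Proof.
move=> opP sizeP P0; apply/negP => /andP[/rootP Px /rootP P'x].
have x0 : x != 0.
  by apply: contraNneq P0 => x_eq0; move: Px; rewrite x_eq0 horner_coef0 => ->.
pose Q := P \Po ('X + x%:P).
have opQ : hyp_op x Q = 0 by rewrite -[x]add0r -hyp_op_comp opP comp_poly0.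
have Q0 : Q`_0 = 0 by rewrite -horner_coef0 horner_comp !hornerE.
have Q1 : Q`_1 = 0.
  rewrite -[Q`_1]mulr1n -coef_deriv -horner_coef0 deriv_comp derivD derivX derivC.
  by rewrite addr0 mulr1 horner_comp !hornerE.
have sizeQ : (size Q <= p)%N by rewrite size_comp_poly2 // size_XaddC.
have Q_eq0 := hyp_op_vanishing x0 sizeQ Q0 Q1 opQ.
have : P = Q \Po ('X - x%:P) by rewrite comp_polyXaddC_K.
by rewrite Q_eq0 comp_poly0 => P_eq0; rewrite P_eq0 coef0 eqxx in P0.
Qed.

End NoDoubleRoot.

Section ReductionModP.
Variables (p : nat) (L : fieldType) (f : {rmorphism 'F_p -> L}).
Hypothesis p_prime : prime p.

Lemma coef_map_P2 n :
  (map_poly f (P2 p))`_n = if (n < p)%N then (coef2 n)%:~R else 0.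
Proof.
by rewrite coef_map /P2 coef_poly; case: ifP => _; [exact: rmorph_int | exact: rmorph0].
Qed.

Lemma natr_Fp_neq0 n : (0 < n < p)%N -> n%:R != 0 :> L.
Proof.
case/andP=> n_gt0 n_lt_p; rewrite -(rmorph_nat f) fmorph_eq0.
by rewrite -(dvdn_pcharf (pchar_Fp p_prime)) gtnNdvd.
Qed.

(* The truncated reduction of c_n still satisfies the recurrence: at the
   truncation point n + 1 = p the left-hand side is p^2 c_p = 0 in L. *)
Lemma map_P2S n : (n.+1 ^ 2)%:R * (map_poly f (P2 p))`_n.+1
  = 4 * (n.*2.+1)%:R * ((n.*2)%:R - 1) * (map_poly f (P2 p))`_n.
Proof.
have := congr1 (fun z : int => z%:~R : L) (coef2S n).
rewrite /= !intrM intrB -!pmulrn !coef_map_P2 => recL.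
case: (ltnP n.+1 p) => [lt_Sn_p | le_p_Sn]; first by rewrite (ltnW lt_Sn_p).
case: (ltnP n p) => [lt_n_p | le_p_n]; last by rewrite !mulr0.
have Sn_eq_p : n.+1 = p by apply/eqP; rewrite eqn_leq le_p_Sn lt_n_p.
by rewrite mulr0 -recL Sn_eq_p natrX -(rmorph_nat f) pchar_Fp_0 // rmorph0 expr0n mul0r.
Qed.

End ReductionModP.

Theorem mainTheorem15 (p : nat) (hp : prime p) :
  separable_poly (P2 p) /\
  (forall (L : fieldType) (f : {rmorphism 'F_p -> L}) (x : L),
      ~~ (root (map_poly f (P2 p)) x && root (map_poly f (P2 p)^`()) x)).
Proof.
have no_common_root (L : fieldType) (f : {rmorphism 'F_p -> L}) (x : L) :
    ~~ (root (map_poly f (P2 p)) x && root (map_poly f (P2 p)^`()) x).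
  rewrite -deriv_map; apply: (no_double_root (natr_Fp_neq0 f hp)).
  - exact: hyp_op_of_rec (map_P2S f hp).
  - by rewrite size_map_poly size_poly.
  - by rewrite coef_map_P2 prime_gt0 // oner_neq0.
split=> //.
(* Over an algebraic closure K of F_p, coprimality is the absence of common roots. *)
have [K [f _]] := countable_algebraic_closure 'F_p.
rewrite unlock -(coprimep_map f); apply: Pdiv.ClosedField.root_coprimep => x Px.
by apply: contraNneq (no_common_root K f x) => P'x; rewrite Px; apply/rootP.
Qed.
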